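(* For every integer $n>0$ there exists an open bounded convex set $P\subset\mathbb R^n$ such that $$\sup_\phi\frac{\int_P|\phi|\,d\mu}{-\mu(P)\inf_P\phi}=2,$$ where the supremum is over all convex functions $\phi:P\to\mathbb R$ with $\phi\in L^1(P)$, $\int_P\phi\,d\mu=0$ and $\phi\not\equiv0$.
   Context: $\mu$ denotes Lebesgue measure on $\mathbb R^n$. *)

From HB Require Import structures.
From mathcomp Require Import all_boot all_order all_algebra.
From mathcomp Require Import all_classical all_reals all_analysis.
Set Implicit Arguments. Unset Strict Implicit. Unset Printing Implicit Defensive.
Import Order.TTheory GRing.Theory Num.Theory.
Import numFieldNormedType.Exports.
Local Open Scope classical_set_scope.
Local Open Scope ring_scope.

Section LebesgueRn.
Context (R : realType).

Definition mR : measurableType _ := measurableTypeR R.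
Definition dR := ltac:(let t := type of mR in match t with measurableType ?d => exact d end).

Fixpoint Rn_disp (n : nat) : measure_display :=
  match n with
  | 0 => dR
  | k.+1 => (Rn_disp k, dR).-prod%mdisp
  end.

Fixpoint Rn (n : nat) : measurableType (Rn_disp n) :=
  match n return measurableType (Rn_disp n) with
  | 0 => mR
  | k.+1 => ((Rn k * mR)%type : measurableType _)
  end.

Fixpoint lebRn (n : nat) : {measure set (Rn n) -> \bar R} :=
  match n return {measure set (Rn n) -> \bar R} with
  | 0 => (@lebesgue_measure R : {measure set mR -> \bar R})
  | k.+1 => ((lebRn k \x (@lebesgue_measure R))%E : {measure set _ -> \bar R})
  end.

Fixpoint coordRn (n : nat) : Rn n -> nat -> R :=
  match n return Rn n -> nat -> R with
  | 0 => fun x _ => x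
  | k.+1 => fun p i => if i == k.+1 then p.2 else @coordRn k p.1 i
  end.

Definition toRow (n : nat) (x : Rn n) : 'rV[R]_n.+1 :=
  \row_(i < n.+1) coordRn x i.
End LebesgueRn.

Section RowMeasure.
Context (R : realType) (n : nat).
Local Open Scope ereal_scope.

Definition lebRow (A : set 'rV[R]_n.+1) : \bar R :=
  lebRn R n (@toRow R n @^-1` A).

Definition integrableRow (D : set 'rV[R]_n.+1) (f : 'rV[R]_n.+1 -> R) : Prop :=
  (lebRn R n).-integrable (@toRow R n @^-1` D) (EFin \o f \o @toRow R n).

Definition integralRow (D : set 'rV[R]_n.+1) (f : 'rV[R]_n.+1 -> R) : \bar R :=
  \int[lebRn R n]_(x in @toRow R n @^-1` D) (f (toRow x))%:E.
End RowMeasure.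

(* Take for P the open cube (-1, 1)^n.  If phi has mean zero, then
   int |phi| = int (|phi| - phi) = 2 int phi^-  and  phi^- <= - inf phi, so the
   ratio is at most 2.
   Conversely, for 0 <= a < 1 the convex function max(0, x_n - a) - c_a, where
   c_a > 0 is the mean of max(0, x_n - a) over the cube, attains its minimum
   -c_a at 0 and equals -c_a on the slab {x_n < a} of measure 2^(n-1) (1 + a);
   hence its ratio is at least 1 + a, which tends to 2. *)

From HB Require Import structures.
From mathcomp Require Import all_boot all_order all_algebra.
From mathcomp Require Import all_classical all_reals all_analysis.
From mathcomp Require Import ring lra measurable_realfun.
Import Order.TTheory GRing.Theory Num.Theory.
Import numFieldNormedType.Exports.
Local Open Scope classical_set_scope.
Local Open Scope ring_scope.

Section Box.
Context (R : realType).

Fixpoint box (k : nat) : set (Rn R k) :=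
  match k return set (Rn R k) with
  | 0 => (`]-1, 1[%classic : set R)
  | k.+1 => box k `*` (`]-1, 1[%classic : set R)
  end.

Lemma boxP k (x : Rn R k) :
  box k x <-> forall j, (j <= k)%N -> `|coordRn x j| < 1.
Proof.
elim: k x => [|k IH] x.
  by rewrite /= in_itv /=; split => [x1 j _|/(_ 0%N isT)]; rewrite ltr_norml.
case: x => x1 x2; rewrite /= in_itv /=; split.
  move=> [/IH x1_box x2_lt1] j jk; case: eqP => [_|/eqP jk'].
    by rewrite ltr_norml.
  by apply: x1_box; rewrite -ltnS ltn_neqAle jk' jk.
move=> x_box; split; last by have := x_box k.+1 (leqnn _); rewrite eqxx ltr_norml.
apply/IH => j jk; have := x_box j (leqW jk).
by rewrite ltn_eqF // ltnS.
Qed.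

Lemma measurable_box k : measurable (box k).
Proof.
elim: k => [|k IH] /=; first exact: measurable_itv.
by apply: measurableX => //; exact: measurable_itv.
Qed.

Definition last_coord {k} (x : Rn R k) : R := coordRn x k.

Lemma measurable_last_coord k : measurable_fun setT (@last_coord k).
Proof.
case: k => [|k]; rewrite /last_coord /=; first exact: measurable_id.
under eq_fun do rewrite eqxx.
exact: measurable_snd.
Qed.

Lemma last_coord_box k (x : Rn R k) : box k x -> `|last_coord x| < 1.
Proof. by move=> /boxP; apply. Qed.

Definition box_slab k (a b : R) : set (Rn R k) :=
  box k `&` (@last_coord k) @^-1` `]a, b[.

Lemma measurable_box_slab k a b : measurable (box_slab k a b).
Proof.
apply: measurableI; first exact: measurable_box.
by rewrite -[X in measurable X]setTI; apply: measurable_last_coord.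
Qed.

Lemma lebesgue_measure_itv_oo (a b : R) : a <= b ->
  lebesgue_measure (`]a, b[%classic : set R) = (b - a)%:E.
Proof.
move=> ab; rewrite lebesgue_measure_itv /= lte_fin.
case: ifPn => [_|]; first by rewrite -EFinD.
by rewrite -leNgt => ba; rewrite (@le_anti _ _ b a) ?ab ?ba // subrr.
Qed.

Lemma lebRn_box k : lebRn R k (box k) = (2 ^+ k.+1)%:E.
Proof.
elim: k => [|k IH] /=; first by rewrite lebesgue_measure_itv_oo ?opprK.
rewrite product_measure1E; [|exact: measurable_box|exact: measurable_itv].
rewrite IH [X in (_ * X)%E](_ : _ = (1 - -1)%:E); last exact: lebesgue_measure_itv_oo.
by rewrite -EFinM [in RHS]exprS; congr _%:E; ring.
Qed.

Lemma lebRn_box_slab k (a b : R) : -1 <= a -> a <= b -> b <= 1 ->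
  lebRn R k (box_slab k a b) = (2 ^+ k * (b - a))%:E.
Proof.
move=> a_ge ab b_le.
have slab_sub : `]a, b[ `<=` (`]-1, 1[%classic : set R).
  by move=> r /=; rewrite !in_itv /= => /andP[ar rb]; apply/andP; split; lra.
case: k => [|k] /=.
  rewrite mul1r -lebesgue_measure_itv_oo //; congr lebesgue_measure.
  by apply/seteqP; split => [x [] //|x ab_x]; split => //; exact: slab_sub.
have -> : box_slab k.+1 a b = box k `*` `]a, b[.
  apply/seteqP; split => -[x1 x2]; rewrite /box_slab /last_coord /= eqxx.
    by move=> [[]].
  by move=> [x1_box ab_x2]; do 2?split => //; exact: slab_sub.
rewrite product_measure1E; [|exact: measurable_box|exact: measurable_itv].
rewrite lebRn_box [X in (_ * X)%E](_ : _ = (b - a)%:E) -?EFinM //.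
exact: lebesgue_measure_itv_oo.
Qed.

Lemma integrable_box_bounded k (f : Rn R k -> R) (M : R) :
  measurable_fun (box k) f -> (forall x, box k x -> `|f x| <= M) ->
  (lebRn R k).-integrable (box k) (EFin \o f).
Proof.
move=> mf fM; apply: measurable_bounded_integrable => //.
- exact: measurable_box.
- by rewrite lebRn_box ltry.
- exists M; split; first exact: num_real.
  by move=> M' MM' x /fM /le_trans; apply; exact: ltW.
Qed.

End Box.

Arguments last_coord {R k}.

Section MeanZero.
Context {d} {T : measurableType d} {R : realType} {mu : {measure set T -> \bar R}}.
Context {D : set T} (mD : measurable D).

Lemma integral_ge_indic (g : T -> R) (B : set T) (a : R) :
  measurable B -> B `<=` D -> 0 <= a -> measurable_fun D g ->
  (forall x, D x -> a * \1_B x <= g x) ->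
  (a%:E * mu B <= \int[mu]_(x in D) (g x)%:E)%E.
Proof.
move=> mB BD a0 mg ag.
have ind0 x : (0 <= (\1_B x : R)%:E)%E by rewrite lee_fin indicE.
rewrite -(setIidl BD) -integral_indic // -ge0_integralZl_EFin //; last first.
  exact/measurable_EFinP/measurable_indic.
apply: ge0_le_integral.
- exact: mD.
- by move=> x _; rewrite mule_ge0.
- apply/measurable_EFinP/measurable_funM; first exact: measurable_cst.
  exact: measurable_indic.
- exact/measurable_EFinP.
- by move=> x Dx; rewrite -EFinM lee_fin ag.
Qed.

Context {f : T -> R} (f_int : mu.-integrable D (EFin \o f)).
Hypothesis f_mean0 : (\int[mu]_(x in D) (f x)%:E = 0)%E.

Let mf : measurable_fun D f.
Proof. exact/measurable_EFinP/(measurable_int mu f_int). Qed.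

Lemma integral_abs_mean0 :
  (\int[mu]_(x in D) `|f x|%:E = \int[mu]_(x in D) (`|f x| - f x)%:E)%E.
Proof.
have abs_int : mu.-integrable D (EFin \o (fun x => `|f x|)).
  by apply: eq_integrable (integrable_abse f_int) => // x _.
under [RHS]eq_integral do rewrite EFinB.
by rewrite (integralB_EFin mD) // f_mean0 sube0.
Qed.

Lemma integral_abs_mean0_le (c : R) : c <= 0 -> (forall x, D x -> c <= f x) ->
  (\int[mu]_(x in D) `|f x|%:E <= (- c *+ 2)%:E * mu D)%E.
Proof.
move=> c0 cf; rewrite integral_abs_mean0 -integral_cst //.
apply: ge0_le_integral => //.
- by move=> x _; rewrite lee_fin subr_ge0 ler_norm.
- apply/measurable_EFinP/measurable_funB => //.
  by apply: measurableT_comp.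
move=> x Dx; rewrite lee_fin; have := cf x Dx.
by case: (lerP 0 (f x)) => fx0; [rewrite ger0_norm|rewrite ltr0_norm]; lra.
Qed.

Lemma integral_abs_mean0_ge (B : set T) (a : R) :
  measurable B -> B `<=` D -> 0 <= a -> (forall x, B x -> f x <= - a) ->
  ((a *+ 2)%:E * mu B <= \int[mu]_(x in D) `|f x|%:E)%E.
Proof.
move=> mB BD a0 fa; rewrite integral_abs_mean0.
apply: integral_ge_indic => //; first by rewrite mulrn_wge0.
  apply/measurable_funB => //; by apply: measurableT_comp.
move=> x Dx; rewrite indicE; case: (boolP (x \in B)) => [/[!inE] /fa fxa|_].
  by rewrite mulr1 ler0_norm; lra.
by rewrite mulr0 subr_ge0 ler_norm.
Qed.

End MeanZero.

Lemma ler_wpdivrMr (R : realFieldType) (x y c : R) : 0 <= x -> 0 <= c ->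
  (0 < y -> x <= c * y) -> x / y <= c.
Proof.
move=> x0 c0 xcy; case: (ltgtP y 0) => [y0|y0|->]; last by rewrite invr0 mulr0.
  by rewrite (le_trans _ c0) // mulr_ge0_le0 // invr_le0 ltW.
by rewrite ler_pdivrMr // xcy.
Qed.

Section NormedBall.
Context (R : realType) (V : normedModType R).
Local Open Scope convex_scope.

Lemma convex_ball (x : V) (r : R) : convex_set (ball x r).
Proof.
apply/convex_setW => y z; rewrite !inE -!ball_normE /= => xy xz t t0 t1.
rewrite inE /=.
have -> : x - (y <| t |> z : convex_lmodType V) =
    t%:num *: (x - y) + (1 - t%:num) *: (x - z).
  by rewrite /conv /= !scalerBr addrACA -scalerDl [t%:num + _]addrC subrK scale1r opprD.
rewrite (le_lt_trans (ler_normD _ _)) // !normrZ !ger0_norm ?subr_ge0 ?ltW //.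
have ty : t%:num * `|x - y| < t%:num * r by rewrite ltr_pM2l.
have tz : (1 - t%:num) * `|x - z| < (1 - t%:num) * r by rewrite ltr_pM2l // subr_gt0.
lra.
Qed.

Lemma bounded_ball (x : V) (r : R) : bounded_set (ball x r).
Proof.
exists (`|x| + r); split; first exact: num_real.
move=> M xrM y; rewrite -ball_normE /= => xy.
have := ler_normD (y - x) x; rewrite subrK distrC; lra.
Qed.

End NormedBall.

Section Hinge.
Context {R : realType}.

Definition hinge (a x : R) : R := Num.max 0 (x - a).

Lemma hinge_ge0 a x : 0 <= hinge a x.
Proof. by rewrite le_max lexx. Qed.

Lemma hinge_ge a x : x - a <= hinge a x.
Proof. by rewrite le_max lexx orbT. Qed.

Lemma hinge_lt1 a x : 0 <= a -> `|x| < 1 -> hinge a x < 1.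
Proof. by rewrite ltr_norml => a0 /andP[_ x1]; rewrite gt_max ltr01 /=; lra. Qed.

Lemma hinge_eq0 a x : x <= a -> hinge a x = 0.
Proof. by move=> xa; rewrite /hinge max_l // subr_le0. Qed.

Lemma hinge_conv a x y t : 0 <= t <= 1 ->
  hinge a (t * x + (1 - t) * y) <= t * hinge a x + (1 - t) * hinge a y.
Proof.
move=> /andP[t0 t1]; have := hinge_ge a x; have := hinge_ge a y.
have := hinge_ge0 a x; have := hinge_ge0 a y.
rewrite ge_max => *; apply/andP; split; nra.
Qed.

Lemma measurable_hinge a : measurable_fun setT (hinge a).
Proof.
apply: measurable_maxr; first exact: measurable_cst.
by apply: measurable_funB => //; exact: measurable_cst.
Qed.

End Hinge.

Definition l1_inf_ratio {R : realType} {m : nat} (P : set 'rV[R]_m.+1)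
    (phi : 'rV[R]_m.+1 -> R) : R :=
  fine (integralRow P (fun x => `|phi x|)) / - (fine (lebRow P) * inf (phi @` P)).

Definition convex_mean0 {R : realType} {m : nat} (P : set 'rV[R]_m.+1)
    (phi : 'rV[R]_m.+1 -> R) : Prop :=
  [/\ @convex_function R 'rV[R]_m.+1 P phi, integrableRow P phi,
      integralRow P phi = 0%E & exists2 x, P x & phi x != 0].

Lemma l1_inf_ratio_le2 (R : realType) (m : nat) (P : set 'rV[R]_m.+1)
    (phi : 'rV[R]_m.+1 -> R) :
  measurable (@toRow R m @^-1` P) -> (lebRow P < +oo)%E ->
  integrableRow P phi -> integralRow P phi = 0%E -> l1_inf_ratio P phi <= 2.
Proof.
move=> mP finP phi_int phi_mean0; rewrite /l1_inf_ratio.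
set c := inf (phi @` P).
have L_ge0 : (0 <= lebRow P)%E by exact: measure_ge0.
have L_fin : lebRow P \is a fin_num by rewrite ge0_fin_numE.
apply: ler_wpdivrMr => //.
  by apply: fine_ge0; apply: integral_ge0 => x _; rewrite lee_fin.
move=> den_gt0.
have c_lt0 : c < 0.
  rewrite ltNge; apply: contraTN den_gt0 => c0.
  by rewrite -leNgt oppr_le0 mulr_ge0 // fine_ge0.
have c_inf : has_inf (phi @` P).
  by apply: contrapT => /inf_out c0; move: c_lt0; rewrite /c c0 ltxx.
have c_le x : (@toRow R m @^-1` P) x -> c <= phi (toRow x).
  by move=> Px; apply: (ge_inf c_inf.2); exists (toRow x).
have abs_fin : integralRow P (fun x => `|phi x|) \is a fin_num.
  rewrite /integralRow /=; apply: (integrable_fin_num mP).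
  exact: (integrable_norm phi_int).
have := integral_abs_mean0_le mP phi_int phi_mean0 c (ltW c_lt0) c_le.
rewrite -/(lebRow P) -(fineK L_fin) -EFinM => abs_le.
rewrite -lee_fin (fineK abs_fin) (le_trans abs_le) // lee_fin; nra.
Qed.

Section Cube.
Context (R : realType) (m : nat).
Local Notation V := 'rV[R]_m.+1.
Local Notation cube := (ball (0 : V) 1).

Lemma cubeP (v : V) : cube v <-> forall j, `|v ord0 j| < 1.
Proof.
split => [[_ v1] j|v1]; first by have := v1 ord0 j; rewrite /ball /= mxE sub0r normrN.
by split => // i j; rewrite /ball /= mxE sub0r normrN (ord1 i).
Qed.

Lemma toRowE (x : Rn R m) j : @toRow R m x ord0 j = coordRn x j.
Proof. by rewrite mxE. Qed.

Lemma preimage_cube : @toRow R m @^-1` cube = box R m.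
Proof.
apply/seteqP; split => x /=.
  by move=> /cubeP x1; apply/boxP => j jm; have := x1 (@Ordinal m.+1 j jm); rewrite toRowE.
by move=> /boxP x1; apply/cubeP => j; rewrite toRowE x1 // -ltnS.
Qed.

Lemma lebRow_cube : lebRow cube = (2 ^+ m.+1)%:E.
Proof. by rewrite /lebRow preimage_cube lebRn_box. Qed.

Definition hinge_mean (a : R) : R :=
  fine (\int[lebRn R m]_(x in box R m) (hinge a (last_coord x))%:E) / 2 ^+ m.+1.

Definition hinge_test (a : R) (v : V) : R := hinge a (v ord0 ord_max) - hinge_mean a.

Lemma hinge_test_toRow a x :
  hinge_test a (toRow x) = hinge a (last_coord x) - hinge_mean a.
Proof. by rewrite /hinge_test toRowE. Qed.

Lemma convex_hinge_test (D : set V) a : convex_function D (hinge_test a).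
Proof.
move=> t x y _ _; set u := (x : V) ord0 ord_max; set w := (y : V) ord0 ord_max.
rewrite /hinge_test convRE /unstable.onem {1}/conv /= !mxE -/u -/w.
have t01 : 0 <= t%:num <= 1 by apply/andP; split; [|exact: le1].
have := hinge_conv a u w _ t01; lra.
Qed.

Section HingeTest.
Variable a : R.
Hypotheses (a_ge0 : 0 <= a) (a_lt1 : a < 1).

Let a_geN1 : -1 <= a. Proof. exact: le_trans (lerN10 _) a_ge0. Qed.

Lemma integrable_hinge_last :
  (lebRn R m).-integrable (box R m) (EFin \o (hinge a \o last_coord)).
Proof.
apply: (@integrable_box_bounded _ _ _ 1).
  apply: measurableT_comp; first exact: measurable_hinge.
  exact/measurable_funTS/measurable_last_coord.
move=> x /last_coord_box x1 /=.
by rewrite ger0_norm ?hinge_ge0 // ltW // hinge_lt1.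
Qed.

Let hinge_integral_fin :
  (\int[lebRn R m]_(x in box R m) (hinge a (last_coord x))%:E)%E \is a fin_num.
Proof. apply: (integrable_fin_num (measurable_box R m)); exact: integrable_hinge_last. Qed.

Lemma hinge_mean_gt0 : 0 < hinge_mean a.
Proof.
have [b ab b1] : exists2 b : R, a < b & b < 1.
  by exists ((a + 1) / 2); [exact: (midf_lt a_lt1).1|exact: (midf_lt a_lt1).2].
have slab_le : (((b - a) * (2 ^+ m * (1 - b)))%:E <=
    \int[lebRn R m]_(x in box R m) (hinge a (last_coord x))%:E)%E.
  rewrite EFinM -lebRn_box_slab ?lexx ?(ltW b1) ?(le_trans a_geN1 (ltW ab)) //.
  apply: integral_ge_indic.
  - exact: measurable_box.
  - exact: measurable_box_slab.
  - exact: subIsetl.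
  - lra.
  - apply: measurableT_comp; first exact: measurable_hinge.
    exact/measurable_funTS/measurable_last_coord.
  move=> x _; rewrite indicE; case: (boolP (x \in _)) => [|_].
    rewrite inE => -[_] /=; rewrite in_itv /= mulr1 => /andP[bx _].
    by apply: le_trans (hinge_ge _ _); lra.
  by rewrite mulr0 hinge_ge0.
rewrite /hinge_mean divr_gt0 ?exprn_gt0 // -lte_fin fineK //.
apply: lt_le_trans slab_le; rewrite lte_fin.
by rewrite !mulr_gt0 ?exprn_gt0 // subr_gt0.
Qed.

Lemma integrableRow_hinge_test : integrableRow cube (hinge_test a).
Proof.
rewrite /integrableRow preimage_cube.
apply: (@integrable_box_bounded _ _ _ (1 + hinge_mean a)) => [|x].
  under eq_fun do rewrite hinge_test_toRow.
  apply: measurable_funB; last exact: measurable_cst.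
  apply: measurableT_comp; first exact: measurable_hinge.
  exact/measurable_funTS/measurable_last_coord.
move=> /last_coord_box /(hinge_lt1 a _ a_ge0); rewrite hinge_test_toRow.
have := hinge_ge0 a (last_coord x); have := hinge_mean_gt0; rewrite ler_norml; lra.
Qed.

Lemma integral_hinge_test : integralRow cube (hinge_test a) = 0%E.
Proof.
rewrite /integralRow preimage_cube.
under eq_integral do rewrite hinge_test_toRow EFinB.
rewrite integralB_EFin //; first last.
- apply: (@integrable_box_bounded _ _ _ `|hinge_mean a|) => //; exact: measurable_cst.
- exact: integrable_hinge_last.
- exact: measurable_box.
rewrite integral_cst ?lebRn_box; last exact: measurable_box.
by rewrite -(fineK hinge_integral_fin) -EFinM /hinge_mean divfK ?subee ?expf_neq0.
Qed.

Lemma hinge_test0 : hinge_test a 0 = - hinge_mean a.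
Proof. by rewrite /hinge_test mxE hinge_eq0 ?add0r. Qed.

Lemma inf_hinge_test : inf (hinge_test a @` cube) = - hinge_mean a.
Proof.
have lb : lbound (hinge_test a @` cube) (- hinge_mean a).
  by move=> _ [v _ <-]; rewrite /hinge_test -[X in X <= _]add0r lerD2r hinge_ge0.
have cube0 : cube 0 by exact: ballxx.
apply/le_anti; rewrite lb_le_inf ?andbT //; last by exists (hinge_test a 0), 0.
by rewrite -hinge_test0; apply: ge_inf; [exists (- hinge_mean a)|exists 0].
Qed.

Lemma hinge_test_convex_mean0 : convex_mean0 cube (hinge_test a).
Proof.
split.
- exact: convex_hinge_test.
- exact: integrableRow_hinge_test.
- exact: integral_hinge_test.
- exists 0; first exact: ballxx.
  by rewrite hinge_test0 oppr_eq0 gt_eqF // hinge_mean_gt0.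
Qed.

Lemma l1_inf_ratio_hinge_test : 1 + a <= l1_inf_ratio cube (hinge_test a).
Proof.
have mean_gt0 := hinge_mean_gt0.
have mean0 := integral_hinge_test; rewrite /integralRow preimage_cube in mean0.
have test_int := integrableRow_hinge_test.
rewrite /integrableRow preimage_cube in test_int.
have slab_neg x : box_slab R m (-1) a x -> hinge_test a (toRow x) <= - hinge_mean a.
  move=> [_ /=]; rewrite in_itv /= => /andP[_ xa].
  by rewrite hinge_test_toRow hinge_eq0 ?sub0r //; exact: ltW.
have := integral_abs_mean0_ge (measurable_box R m) test_int mean0 _ _
  (measurable_box_slab R m (-1) a) (@subIsetl _ _ _) (ltW mean_gt0) slab_neg.
rewrite lebRn_box_slab ?lexx ?(ltW a_lt1) // => abs_ge.
rewrite /l1_inf_ratio lebRow_cube inf_hinge_test /= mulrN opprK.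
rewrite ler_pdivlMr; last by rewrite mulr_gt0 // exprn_gt0.
rewrite /integralRow preimage_cube -lee_fin fineK; last first.
  apply: (integrable_fin_num (measurable_box R m)).
  exact: (integrable_norm test_int).
apply: le_trans abs_ge; rewrite -EFinM lee_fin exprS; nra.
Qed.

End HingeTest.

Lemma ereal_sup_l1_inf_ratio_cube :
  ereal_sup [set (l1_inf_ratio cube phi)%:E | phi in convex_mean0 cube] = 2%:E.
Proof.
apply/le_anti/andP; split.
  apply: ge_ereal_sup => _ [phi [_ phi_int phi_mean0 _] <-]; rewrite lee_fin.
  apply: l1_inf_ratio_le2 => //; first by rewrite preimage_cube; exact: measurable_box.
  by rewrite lebRow_cube ltry.
apply/lee_subgt0Pr => e e_gt0; apply: le_ereal_sup_tmp.
have [a [a_ge0 a_lt1 ea]] : exists a : R, [/\ 0 <= a, a < 1 & 2 - e <= 1 + a].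
  exists (Num.max 0 (1 - e)); split; first by rewrite le_max lexx.
    by rewrite gt_max ltr01 /=; lra.
  have : 1 - e <= Num.max 0 (1 - e) by rewrite le_max lexx orbT.
  lra.
exists (l1_inf_ratio cube (hinge_test a))%:E.
  by exists (hinge_test a) => //; exact: hinge_test_convex_mean0.
by rewrite -EFinB lee_fin (le_trans ea) // l1_inf_ratio_hinge_test.
Qed.

End Cube.

Theorem proposition4p3 (R : realType) (m : nat) :
  exists P : set 'rV[R]_m.+1,
    [/\ open P, bounded_set P, @convex_set R 'rV[R]_m.+1 P &
      ereal_sup
        [set ((fine (integralRow P (fun x => `|phi x|)))
               / (- (fine (lebRow P) * inf (phi @` P))))%:E
        | phi in [set phi : 'rV[R]_m.+1 -> R |
            [/\ @convex_function R 'rV[R]_m.+1 P phi,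
                integrableRow P phi,
                integralRow P phi = 0%E &
                exists2 x, P x & phi x != 0]]] = 2%:E].
Proof.
exists (ball (0 : 'rV[R]_m.+1) 1); split.
- exact: ball_open.
- exact: bounded_ball.
- exact: convex_ball.
- exact: ereal_sup_l1_inf_ratio_cube.
Qed.
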